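(* Let $f$ and $g$ be full-branch Markov maps on $[-1,1]$ which both satisfy the partition spacing condition (P). Suppose in addition that $f$ has bounded distortion with constant $C^{(f)}_1$ and that $g$ has uniform expansion parameter $\lambda^{(g)}=\inf|g'|>0$. Then $g\circ f$ satisfies (P).
   Context: A full-branch Markov map of $[-1,1]$ has disjoint open branch intervals $\mathcal{O}_\iota$, $\iota\in I$ ($I$ countable), covering $[-1,1]$ up to a countable set, with $f|_{\mathcal{O}_\iota}$ extending to a $C^2$ bijection $\hat f_\iota:\overline{\mathcal{O}_\iota}\to[-1,1]$; $v_\iota=\hat f_\iota^{-1}$. Bounded distortion: $C_1=\sup_{\iota,x}|v_\iota''(x)/v_\iota'(x)|<\infty$. Partition spacing condition (P): $\Xi:=\sup\{|\mathcal{O}_\iota|/d(\mathcal{O}_\iota,\sigma):\iota\in I,\ \sigma\in\{-1,1\},\ \sigma\notin\overline{\mathcal{O}_\iota}\}<\infty$. The branch intervals of $g\circ f$ are the interiors of $v^{(f)}_\phi(v^{(g)}_\gamma([-1,1]))$ over pairs of branches $\phi$ of $f$ and $\gamma$ of $g$. *)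

From Stdlib Require Import Reals.
From Coquelicot Require Import Coquelicot.
Open Scope R_scope.

Definition set_closure (S : R -> Prop) (x : R) : Prop :=
  forall eps : R, 0 < eps -> exists z, S z /\ Rabs (z - x) < eps.

Definition set_interior (S : R -> Prop) (x : R) : Prop :=
  exists eps : R, 0 < eps /\ forall y, Rabs (y - x) < eps -> S y.

Definition branch_interval (a b : R) : R -> Prop := fun x => a < x < b.

(* h is C^2 on R (a C^2 function on a closed interval is exactly the
   restriction of a C^2 function on R). *)
Definition C2 (h : R -> R) : Prop :=
  (forall x, ex_derive h x) /\
  (forall x, ex_derive (Derive h) x) /\
  (forall x, continuous (Derive (Derive h)) x).

(* Full-branch Markov map of [-1,1]:
   branch intervals O_i = (a i, b i), i in a countable index type I;
   fhat i : C^2 extension of f|O_i, a bijection [a i, b i] -> [-1,1];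
   v i    : its inverse branch v_i = (fhat i)^{-1} on [-1,1]. *)
Definition FBM (I : Type) (a b : I -> R) (f : R -> R)
    (fhat v : I -> R -> R) : Prop :=
  (exists enc : I -> nat, forall i j, enc i = enc j -> i = j) /\
  (forall i, -1 <= a i /\ a i < b i /\ b i <= 1) /\
  (forall i j x, a i < x < b i -> a j < x < b j -> i = j) /\
  (exists e : nat -> R, forall x, -1 <= x <= 1 ->
      (exists i, a i < x < b i) \/ (exists n, e n = x)) /\
  (forall i, C2 (fhat i)) /\
  (forall i x, a i < x < b i -> fhat i x = f x) /\
  (forall i x, a i <= x <= b i -> -1 <= fhat i x <= 1) /\
  (forall i x y, a i <= x <= b i -> a i <= y <= b i ->
      fhat i x = fhat i y -> x = y) /\
  (forall i y, -1 <= y <= 1 ->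
      a i <= v i y <= b i /\ fhat i (v i y) = y).

(* Bounded distortion: C1 = sup_{i,x} |v_i''(x) / v_i'(x)| < oo
   (sup taken over x in (-1,1); by continuity this is the same sup as over [-1,1]). *)
Definition bounded_distortion (I : Type) (v : I -> R -> R) : Prop :=
  exists C1 : R, forall i y, -1 < y < 1 ->
    ex_derive (v i) y /\ ex_derive (Derive (v i)) y /\
    Derive (v i) y <> 0 /\
    Rabs (Derive (Derive (v i)) y / Derive (v i) y) <= C1.

Definition uniformly_expanding (I : Type) (a b : I -> R) (g : R -> R) : Prop :=
  exists lam : R, 0 < lam /\ forall i x, a i < x < b i ->
    ex_derive g x /\ lam <= Rabs (Derive g x).

(* Partition spacing condition (P) for a family of (branch) sets O j:
   sup { |O_j| / d(O_j, sigma) : sigma in {-1,1}, sigma not in set_closure O_j } < oo,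
   with |O_j| = sup_{x,y in O_j} |x-y| and d(O_j,sigma) = inf_{z in O_j} |z - sigma|;
   |O| <= Xi d(O,sigma) is written out as forall x y z in O, |x-y| <= Xi |z-sigma|. *)
Definition spacing_P (J : Type) (O : J -> R -> Prop) : Prop :=
  exists Xi : R, forall j sigma, (sigma = -1 \/ sigma = 1) ->
    ~ set_closure (O j) sigma ->
    forall x y z, O j x -> O j y -> O j z ->
      Rabs (x - y) <= Xi * Rabs (z - sigma).

(* Branch intervals of g o f: interiors of v^f_phi (v^g_gamma ([-1,1])). *)
Definition comp_branches (If Ig : Type) (vf : If -> R -> R) (vg : Ig -> R -> R)
    : (If * Ig) -> R -> Prop :=
  fun p => set_interior (fun x => exists y, -1 <= y <= 1 /\
                                 x = vf (fst p) (vg (snd p) y)).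

From Stdlib Require Import Reals Lra Psatz Classical.
From Coquelicot Require Import Coquelicot.
Open Scope R_scope.

(* Fix a branch phi of f, a branch gamma of g and an endpoint sigma of [-1,1]
   not adherent to the composite branch v_phi(O_gamma).  If sigma is not
   adherent to O_phi either, the composite branch lies in O_phi and (P) for f
   applies.  Otherwise sigma is an endpoint of O_phi.  Bounded distortion makes
   v_phi bi-Lipschitz on (-1,1), with ratio e^(2 C1) between the two constants,
   and v_phi carries an endpoint tau of [-1,1] to sigma.  Were tau adherent to
   O_gamma, sigma would be adherent to v_phi(O_gamma); so (P) for g holds at
   tau, and the bi-Lipschitz bounds transport it to v_phi(O_gamma) with
   constant e^(2 C1) Xi_g. *)

Lemma Rle_0_of_small_multiples (D M : R) :
  (forall eta, 0 < eta < 1 -> D <= eta * M) -> D <= 0.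
Proof.
  intros H. apply Rnot_lt_le. intros HD.
  assert (HM : 0 < M) by (specialize (H (/ 2) ltac:(lra)); lra).
  assert (Hq : 0 < D / (2 * M)) by (apply Rdiv_lt_0_compat; lra).
  set (eta := Rmin (/ 2) (D / (2 * M))).
  assert (Heta : 0 < eta < 1).
  { unfold eta. split; [apply Rmin_glb_lt; lra|]. pose proof (Rmin_l (/ 2) (D / (2 * M))). lra. }
  assert (eta * M <= D / (2 * M) * M) by (apply Rmult_le_compat_r; [lra | apply Rmin_r]).
  assert (D / (2 * M) * M = D / 2) by (field; lra).
  specialize (H eta Heta). lra.
Qed.

Lemma sign_mult (a b : R) :
  (a = -1 \/ a = 1) -> (b = -1 \/ b = 1) -> a * b = -1 \/ a * b = 1.
Proof. intros [-> | ->] [-> | ->]; [right | left | left | right]; ring. Qed.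

Lemma Rabs_sub_endpoint (x sigma : R) :
  (sigma = -1 \/ sigma = 1) -> -1 <= x <= 1 -> Rabs (x - sigma) = sigma * (sigma - x).
Proof.
  intros [-> | ->] hx; [rewrite Rabs_pos_eq | rewrite Rabs_left1]; lra.
Qed.

Lemma set_closure_branch_interval (a b c : R) :
  set_closure (branch_interval a b) c -> a <= c <= b.
Proof.
  intros H. split; apply Rnot_lt_le; intros hc.
  - destruct (H (a - c) ltac:(lra)) as [z [[hz _] Hz]].
    rewrite Rabs_pos_eq in Hz; lra.
  - destruct (H (c - b) ltac:(lra)) as [z [[_ hz] Hz]].
    rewrite Rabs_left1 in Hz; lra.
Qed.

Lemma set_interior_open (S : R -> Prop) (x : R) :
  set_interior S x -> set_interior (set_interior S) x.
Proof.
  intros [e [he H]]. exists e. split; [exact he|]. intros y hy.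
  exists (e - Rabs (y - x)). split; [lra|]. intros w hw. apply H.
  replace (w - x) with ((w - y) + (y - x)) by ring.
  eapply Rle_lt_trans; [apply Rabs_triang | lra].
Qed.

Lemma set_closure_interior_of_one_sided (S : R -> Prop) (c sigma rho : R) :
  (sigma = -1 \/ sigma = 1) -> 0 < rho ->
  (forall x, 0 < sigma * (c - x) < rho -> S x) ->
  set_closure (set_interior S) c.
Proof.
  intros Hsigma Hrho HS eps Heps.
  set (d := Rmin eps rho / 2).
  assert (Hd : 0 < d /\ d < eps /\ d < rho).
  { pose proof (Rmin_l eps rho). pose proof (Rmin_r eps rho).
    assert (0 < Rmin eps rho) by (apply Rmin_glb_lt; lra). unfold d. lra. }
  exists (c - sigma * d). split.
  - exists (Rmin d (rho - d)). split; [apply Rmin_glb_lt; lra|].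
    intros y Hy. apply HS. apply Rabs_def2 in Hy.
    pose proof (Rmin_l d (rho - d)). pose proof (Rmin_r d (rho - d)).
    destruct Hsigma as [-> | ->]; lra.
  - apply Rabs_def1; destruct Hsigma as [-> | ->]; lra.
Qed.

Lemma set_interior_point_avoiding (S : R -> Prop) (x p q eta : R) :
  set_interior S x -> 0 < eta ->
  exists x', S x' /\ Rabs (x' - x) < eta /\ x' <> p /\ x' <> q.
Proof.
  intros [e [he H]] heta.
  set (h := Rmin e eta / 2).
  assert (hh : 0 < h /\ h < e /\ h < eta).
  { pose proof (Rmin_l e eta). pose proof (Rmin_r e eta).
    assert (0 < Rmin e eta) by (apply Rmin_glb_lt; lra). unfold h. lra. }
  (* Of the three distinct points x + h, x + h/2, x + h/4 one is neither p nor q. *)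
  assert (Hk : exists k, 0 < k <= h /\ x + k <> p /\ x + k <> q).
  { destruct (Req_dec (x + h) p), (Req_dec (x + h) q),
      (Req_dec (x + h / 2) p), (Req_dec (x + h / 2) q);
      first [exists h; lra | exists (h / 2); lra | exists (h / 4); lra]. }
  destruct Hk as [k [hk [hp hq]]].
  assert (Ek : Rabs (x + k - x) = k)
    by (replace (x + k - x) with k by ring; apply Rabs_pos_eq; lra).
  exists (x + k). repeat split; [apply H | | |]; lra.
Qed.

Lemma bound_on_open_set_off_two_points (O : R -> Prop) (p q K c : R) : 0 <= K ->
  (forall x, O x -> set_interior O x) ->
  (forall x y z, O x -> O y -> O z ->
     x <> p -> x <> q -> y <> p -> y <> q -> z <> p -> z <> q ->
     Rabs (x - y) <= K * Rabs (z - c)) ->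
  forall x y z, O x -> O y -> O z -> Rabs (x - y) <= K * Rabs (z - c).
Proof.
  intros HK Hopen H x y z hx hy hz.
  cut (Rabs (x - y) - K * Rabs (z - c) <= 0); [lra|].
  apply (Rle_0_of_small_multiples _ (2 + K)). intros eta he.
  destruct (set_interior_point_avoiding O x p q eta (Hopen x hx) ltac:(lra))
    as [x' [ox [dx [x1 x2]]]].
  destruct (set_interior_point_avoiding O y p q eta (Hopen y hy) ltac:(lra))
    as [y' [oy [dy [y1 y2]]]].
  destruct (set_interior_point_avoiding O z p q eta (Hopen z hz) ltac:(lra))
    as [z' [oz [dz [z1 z2]]]].
  specialize (H x' y' z' ox oy oz x1 x2 y1 y2 z1 z2).
  assert (Rabs (x - y) <= Rabs (x' - y') + Rabs (x' - x) + Rabs (y' - y)).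
  { replace (x - y) with ((x' - y') + (x - x') + (y' - y)) by ring.
    rewrite (Rabs_minus_sym x' x).
    pose proof (Rabs_triang ((x' - y') + (x - x')) (y' - y)).
    pose proof (Rabs_triang (x' - y') (x - x')). lra. }
  assert (Rabs (z' - c) <= Rabs (z - c) + Rabs (z' - z)).
  { replace (z' - c) with ((z - c) + (z' - z)) by ring. apply Rabs_triang. }
  nra.
Qed.

Lemma spacing_closed_interval (a b K c : R) : a < b ->
  (forall x y z, a < x < b -> a < y < b -> a < z < b -> Rabs (x - y) <= K * Rabs (z - c)) ->
  forall x y z, a <= x <= b -> a <= y <= b -> a <= z <= b ->
    Rabs (x - y) <= Rabs K * Rabs (z - c).
Proof.
  intros hab H x y z hx hy hz.
  set (contract := fun eta w => w + eta * ((a + b) / 2 - w)).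
  assert (Hin : forall eta w, 0 < eta < 1 -> a <= w <= b -> a < contract eta w < b).
  { intros eta w he hw. unfold contract. split; nra. }
  cut (Rabs (x - y) - Rabs K * Rabs (z - c) <= 0); [lra|].
  apply (Rle_0_of_small_multiples _ (Rabs (x - y) + Rabs K * (b - a))). intros eta he.
  specialize (H _ _ _ (Hin eta x he hx) (Hin eta y he hy) (Hin eta z he hz)).
  assert (Exy : Rabs (contract eta x - contract eta y) = (1 - eta) * Rabs (x - y)).
  { unfold contract. replace (_ - _) with ((1 - eta) * (x - y)) by ring.
    rewrite Rabs_mult, Rabs_pos_eq; lra. }
  assert (Ez : Rabs (contract eta z - c) <= Rabs (z - c) + eta * (b - a)).
  { unfold contract. replace (_ - c) with ((z - c) + eta * ((a + b) / 2 - z)) by ring.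
    eapply Rle_trans; [apply Rabs_triang|]. rewrite Rabs_mult, (Rabs_pos_eq eta) by lra.
    apply Rplus_le_compat_l, Rmult_le_compat_l; [lra|]. apply Rabs_le. lra. }
  assert (K * Rabs (contract eta z - c) <= Rabs K * (Rabs (z - c) + eta * (b - a))).
  { eapply Rle_trans; [apply Rle_abs|]. rewrite Rabs_mult, Rabs_Rabsolu.
    apply Rmult_le_compat_l; [apply Rabs_pos | exact Ez]. }
  pose proof (Rabs_pos K). pose proof (Rabs_pos (x - y)). nra.
Qed.

Lemma continuous_nonvanishing_sign (D : R -> R) :
  (forall y, -1 < y < 1 -> continuity_pt D y /\ D y <> 0) ->
  exists s, (s = -1 \/ s = 1) /\ forall y, -1 < y < 1 -> 0 < s * D y.
Proof.
  intros H.
  assert (Hsame : forall p q, -1 < p -> p < q -> q < 1 -> 0 < D p * D q).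
  { intros p q hp hpq hq. apply Rnot_le_lt. intros Hpq.
    destruct (H p ltac:(lra)) as [_ Hp]. destruct (H q ltac:(lra)) as [_ Hq].
    assert (Hs : exists s, s <> 0 /\ s * D p < 0 /\ 0 < s * D q).
    { destruct (Rlt_or_le (D p) 0).
      - assert (0 <= D q) by nra. exists 1. lra.
      - assert (D q <= 0) by nra. exists (-1). lra. }
    destruct Hs as [s [Hs0 [Hsp Hsq]]].
    destruct (Ranalysis5.IVT_interv (fun y => s * D y) p q) as [r [hr Hr]]; auto.
    - intros y hy. apply continuity_pt_scal, H. lra.
    - destruct (H r ltac:(lra)) as [_ Hr0]. apply Hr0.
      apply (Rmult_eq_reg_l s); [lra | exact Hs0]. }
  destruct (H 0 ltac:(lra)) as [_ H0].
  assert (Hall : forall y, -1 < y < 1 -> 0 < D y * D 0).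
  { intros y hy. destruct (Rtotal_order y 0) as [h | [-> | h]].
    - apply Hsame; lra.
    - destruct (Rlt_or_le 0 (D 0)); nra.
    - rewrite Rmult_comm. apply Hsame; lra. }
  destruct (Rlt_or_le 0 (D 0)); [exists 1 | exists (-1)];
    (split; [lra | intros y hy; pose proof (Hall y hy); nra]).
Qed.

Lemma ratio_bound_of_log_derivative (P : R -> R) (C : R) :
  (forall y, -1 < y < 1 -> 0 < P y /\ ex_derive P y /\ Rabs (Derive P y / P y) <= C) ->
  forall y, -1 < y < 1 -> P 0 * exp (- C) <= P y <= P 0 * exp C.
Proof.
  intros H y hy.
  destruct (H 0 ltac:(lra)) as [HP0 [_ HC]].
  assert (HC0 : 0 <= C) by (pose proof (Rabs_pos (Derive P 0 / P 0)); lra).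
  assert (Hln : Rabs (ln (P y) - ln (P 0)) <= C * Rabs (y - 0)).
  { apply (bounded_variation (fun t => ln (P t)) (fun t => Derive P t / P t)).
    intros t ht. rewrite !Rminus_0_r in ht.
    assert (Rabs y < 1) by (apply Rabs_def1; lra).
    assert (ht' : -1 < t < 1) by (apply Rabs_lt_between; lra).
    destruct (H t ht') as [HPt [HdP Hbd]]. split; [|exact Hbd].
    apply (is_derive_comp ln P t); [apply is_derive_ln; exact HPt | apply Derive_correct, HdP]. }
  assert (Rabs (y - 0) <= 1) by (rewrite Rminus_0_r; apply Rabs_le; lra).
  assert (Hln' : Rabs (ln (P y) - ln (P 0)) <= C) by nra.
  apply Rabs_le_between in Hln'.
  destruct (H y hy) as [HPy _].
  rewrite <- (exp_ln (P y)), <- (exp_ln (P 0)), <- !exp_plus by assumption.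
  split; apply Rnot_lt_le; intros Hlt; apply exp_lt_inv in Hlt; lra.
Qed.

Lemma bilipschitz_of_bounded_distortion (V : R -> R) (C : R) :
  (forall y, -1 < y < 1 -> ex_derive V y /\ ex_derive (Derive V) y /\
      Derive V y <> 0 /\ Rabs (Derive (Derive V) y / Derive V y) <= C) ->
  exists s m, (s = -1 \/ s = 1) /\ 0 < m /\
    forall w u, -1 < w -> w <= u -> u < 1 ->
      m * (u - w) <= s * (V u - V w) <= exp (2 * C) * m * (u - w).
Proof.
  intros H.
  destruct (continuous_nonvanishing_sign (Derive V)) as [s [Hs Hpos]].
  { intros y hy. destruct (H y hy) as [_ [HD [HD0 _]]]. split; [|exact HD0].
    apply continuity_pt_filterlim, (@ex_derive_continuous R_AbsRing R_NormedModule), HD. }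
  set (P := fun y => s * Derive V y).
  assert (HP : forall y, -1 < y < 1 -> P 0 * exp (- C) <= P y <= P 0 * exp C).
  { apply ratio_bound_of_log_derivative. intros y hy.
    destruct (H y hy) as [_ [HD [HD0 Hr]]].
    split; [apply Hpos, hy|]. split; [apply ex_derive_scal, HD|].
    unfold P. rewrite Derive_scal.
    replace (s * Derive (Derive V) y / (s * Derive V y))
      with (Derive (Derive V) y / Derive V y) by (field; destruct Hs; lra).
    exact Hr. }
  exists s, (P 0 * exp (- C)). split; [exact Hs|]. split.
  { apply Rmult_lt_0_compat; [apply Hpos; lra | apply exp_pos]. }
  intros w u hw hwu hu.
  destruct (Rle_lt_or_eq_dec _ _ hwu) as [hlt | <-]; [|rewrite !Rminus_diag; lra].
  destruct (MVT_cor2 V (Derive V) w u hlt) as [c [Ec hc]].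
  { intros c hc. apply is_derive_Reals, Derive_correct, H. lra. }
  rewrite Ec.
  assert (Ee : exp (2 * C) * (P 0 * exp (- C)) = P 0 * exp C).
  { replace (2 * C) with (C + C) by ring. rewrite exp_plus.
    replace (exp C * exp C * (P 0 * exp (- C))) with (P 0 * exp C * exp (C + - C))
      by (rewrite exp_plus; ring).
    rewrite Rplus_opp_r, exp_0. ring. }
  rewrite Ee. destruct (HP c ltac:(lra)). unfold P in *. nra.
Qed.

Section CompositeBranch.

Variables (V : R -> R) (af bf ag bg s m E : R) (T : R -> Prop).

Hypothesis Haf_bf : -1 <= af /\ af < bf /\ bf <= 1.
Hypothesis Hag_bg : -1 <= ag /\ ag < bg /\ bg <= 1.
Hypothesis V_into : forall y, -1 <= y <= 1 -> af <= V y <= bf.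
Hypothesis V_onto : forall x, af <= x <= bf -> exists y, -1 <= y <= 1 /\ V y = x.
Hypothesis Hs : s = -1 \/ s = 1.
Hypothesis Hm : 0 < m.
Hypothesis V_bilip : forall w u, -1 < w -> w <= u -> u < 1 ->
  m * (u - w) <= s * (V u - V w) <= E * m * (u - w).
Hypothesis T_image : forall x, T x <-> exists t, ag <= t <= bg /\ x = V t.

Lemma E_nonneg : 0 <= E.
Proof. destruct (V_bilip 0 (/ 2)) as [Hlo Hup]; nra. Qed.

Lemma V_lipschitz (t t' : R) : -1 < t < 1 -> -1 < t' < 1 ->
  Rabs (V t - V t') <= E * m * Rabs (t - t').
Proof.
  assert (Hord : forall a b, -1 < a -> a <= b -> b < 1 -> Rabs (V b - V a) <= E * m * (b - a)).
  { intros a b ha hab hb. destruct (V_bilip a b ha hab hb) as [Hlo Hup].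
    assert (0 <= m * (b - a)) by (apply Rmult_le_pos; lra).
    apply Rabs_le. destruct Hs as [-> | ->]; lra. }
  intros ht ht'. destruct (Rle_or_lt t t').
  - rewrite Rabs_minus_sym, (Rabs_minus_sym t), (Rabs_pos_eq (t' - t)) by lra.
    apply Hord; lra.
  - rewrite (Rabs_pos_eq (t - t')) by lra. apply Hord; lra.
Qed.

Lemma V_monotone_toward (tau u w : R) : (tau = -1 \/ tau = 1) ->
  -1 < u < 1 -> -1 < w < 1 -> 0 <= tau * (w - u) ->
  m * (tau * (w - u)) <= tau * s * (V w - V u).
Proof.
  intros [-> | ->] hu hw Hdir.
  - destruct (V_bilip w u) as [Hlo _]; lra.
  - destruct (V_bilip u w) as [Hlo _]; lra.
Qed.

Lemma V_dist_endpoint (tau u : R) : (tau = -1 \/ tau = 1) -> -1 < u < 1 ->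
  m * Rabs (u - tau) <= Rabs (V u - tau * s).
Proof.
  intros Htau hu.
  assert (Hsig := sign_mult tau s Htau Hs).
  assert (HV : forall y, -1 <= y <= 1 -> -1 <= V y <= 1)
    by (intros y hy; specialize (V_into y hy); lra).
  rewrite (Rabs_sub_endpoint u tau), (Rabs_sub_endpoint (V u) (tau * s))
    by first [assumption | lra | apply HV; lra].
  cut (m * (tau * (tau - u)) - tau * s * (tau * s - V u) <= 0); [lra|].
  apply (Rle_0_of_small_multiples _ (m * (tau * (tau - u)))). intros eta he.
  set (w := tau + eta * (u - tau)).
  assert (hw : -1 < w < 1) by (unfold w; destruct Htau as [-> | ->]; nra).
  assert (Ew : tau * (w - u) = (1 - eta) * (tau * (tau - u))) by (unfold w; ring).
  assert (Hdir : 0 <= tau * (w - u)).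
  { rewrite Ew. apply Rmult_le_pos; [lra|]. destruct Htau as [-> | ->]; lra. }
  pose proof (V_monotone_toward tau u w Htau hu hw Hdir) as Hmono. rewrite Ew in Hmono.
  pose proof (Rabs_sub_endpoint (V w) (tau * s) Hsig (HV w ltac:(lra))) as Hw.
  pose proof (Rabs_pos (V w - tau * s)). lra.
Qed.

Lemma interior_image (x : R) : set_interior T x -> exists t, ag <= t <= bg /\ x = V t.
Proof.
  intros [e [he H]]. apply T_image, H. rewrite Rminus_diag, Rabs_R0. exact he.
Qed.

Lemma interior_image_off_endpoints (x : R) :
  set_interior T x -> x <> V (-1) -> x <> V 1 ->
  exists t, ag <= t <= bg /\ -1 < t < 1 /\ x = V t.
Proof.
  intros Hx H1 H2. destruct (interior_image x Hx) as [t [ht ->]].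
  assert (t <> -1) by (intros ->; auto). assert (t <> 1) by (intros ->; auto).
  exists t. repeat split; lra.
Qed.

Lemma image_near_endpoint (tau sigma : R) : (tau = -1 \/ tau = 1) -> sigma = tau * s ->
  ag <= tau <= bg -> af <= sigma <= bf ->
  exists rho, 0 < rho /\ forall x, 0 < sigma * (sigma - x) < rho -> T x.
Proof.
  intros Htau Esig Htaug Hsigf.
  assert (Hsig : sigma = -1 \/ sigma = 1) by (rewrite Esig; apply sign_mult; assumption).
  set (c := (ag + bg) / 2).
  assert (Hc : -1 < c < 1 /\ ag < c < bg) by (unfold c; lra).
  assert (HVc : af <= V c <= bf) by (apply V_into; lra).
  set (d := sigma * (sigma - V c)).
  assert (Hd : 0 < d).
  { pose proof (V_dist_endpoint tau c Htau (proj1 Hc)) as Hdist.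
    rewrite <- Esig, (Rabs_sub_endpoint (V c) sigma) in Hdist by (assumption || lra).
    assert (0 < Rabs (c - tau)) by (apply Rabs_pos_lt; destruct Htau as [-> | ->]; lra).
    assert (0 < m * Rabs (c - tau)) by (apply Rmult_lt_0_compat; assumption).
    unfold d. lra. }
  set (d' := sigma * (sigma - V (- tau))).
  (* The second choice keeps x away from V (-tau), on which the bi-Lipschitz
     bounds say nothing. *)
  exists (if Rlt_dec 0 d' then Rmin d d' else d).
  split; [destruct (Rlt_dec 0 d'); [apply Rmin_glb_lt|]; lra|].
  intros x Hx.
  assert (Hxd : sigma * (sigma - x) < d /\ x <> V (- tau)).
  { pose proof (Rmin_l d d'). pose proof (Rmin_r d d').
    destruct (Rlt_dec 0 d'); (split; [lra | intros ->; unfold d' in *; lra]). }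
  destruct Hxd as [Hxd Hxv].
  destruct (V_onto x) as [w [hw <-]].
  { unfold d in Hxd. destruct Hsig as [-> | ->]; lra. }
  apply T_image. exists w. split; [|reflexivity].
  destruct (Req_dec w tau) as [-> | Hwtau]; [lra|].
  assert (Hw : -1 < w < 1).
  { assert (w <> - tau) by (intros ->; auto). destruct Htau as [-> | ->]; lra. }
  destruct (Rle_or_lt 0 (tau * (c - w))) as [Hfar | Hnear].
  - exfalso.
    pose proof (V_monotone_toward tau w c Htau Hw (proj1 Hc) Hfar) as Hmono.
    rewrite <- Esig in Hmono.
    assert (0 <= m * (tau * (c - w))) by (apply Rmult_le_pos; lra).
    unfold d in Hxd. lra.
  - destruct Htau as [-> | ->]; lra.
Qed.

(* The bi-Lipschitz bounds hold on (-1,1) only, so the points V (-1) and V 1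
   are avoided by perturbation inside the open set. *)
Lemma spacing_interior_image (tau K : R) : (tau = -1 \/ tau = 1) -> 0 <= K ->
  (forall t t' u, ag <= t <= bg -> ag <= t' <= bg -> ag <= u <= bg ->
     Rabs (t - t') <= K * Rabs (u - tau)) ->
  forall x y z, set_interior T x -> set_interior T y -> set_interior T z ->
    Rabs (x - y) <= E * K * Rabs (z - tau * s).
Proof.
  intros Htau HK Hspc.
  pose proof E_nonneg.
  apply (bound_on_open_set_off_two_points _ (V (-1)) (V 1));
    [apply Rmult_le_pos; assumption | apply set_interior_open |].
  intros x y z Hx Hy Hz Hx1 Hx2 Hy1 Hy2 Hz1 Hz2.
  destruct (interior_image_off_endpoints x Hx Hx1 Hx2) as [t [Ht [Ht' ->]]].
  destruct (interior_image_off_endpoints y Hy Hy1 Hy2) as [t' [Hu [Hu' ->]]].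
  destruct (interior_image_off_endpoints z Hz Hz1 Hz2) as [u [Hv [Hv' ->]]].
  assert (HEm : 0 <= E * m) by (apply Rmult_le_pos; lra).
  eapply Rle_trans; [apply V_lipschitz; assumption|].
  eapply Rle_trans; [apply Rmult_le_compat_l; [exact HEm | exact (Hspc t t' u Ht Hu Hv)]|].
  replace (E * m * (K * Rabs (u - tau))) with (E * K * (m * Rabs (u - tau))) by ring.
  apply Rmult_le_compat_l; [apply Rmult_le_pos; assumption | apply V_dist_endpoint; assumption].
Qed.

Lemma spacing_near_endpoint (sigma Xg : R) :
  (sigma = -1 \/ sigma = 1) -> af <= sigma <= bf ->
  ~ set_closure (set_interior T) sigma ->
  (forall tau, (tau = -1 \/ tau = 1) -> ~ set_closure (branch_interval ag bg) tau ->
     forall x y z, branch_interval ag bg x -> branch_interval ag bg y ->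
       branch_interval ag bg z -> Rabs (x - y) <= Xg * Rabs (z - tau)) ->
  forall x y z, set_interior T x -> set_interior T y -> set_interior T z ->
    Rabs (x - y) <= E * Rabs Xg * Rabs (z - sigma).
Proof.
  intros Hsigma Hsigf Hncl HXg.
  set (tau := sigma * s).
  assert (Htau : tau = -1 \/ tau = 1) by (apply sign_mult; assumption).
  assert (Esig : sigma = tau * s) by (unfold tau; destruct Hs as [-> | ->]; ring).
  assert (Hout : ~ set_closure (branch_interval ag bg) tau).
  { intros Hcl. apply set_closure_branch_interval in Hcl. apply Hncl.
    destruct (image_near_endpoint tau sigma Htau Esig Hcl Hsigf) as [rho [Hrho Hnear]].
    exact (set_closure_interior_of_one_sided T sigma sigma rho Hsigma Hrho Hnear). }
  rewrite Esig. apply (spacing_interior_image tau); [exact Htau | apply Rabs_pos |].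
  apply (spacing_closed_interval ag bg Xg tau); [lra | exact (HXg tau Htau Hout)].
Qed.

Lemma composite_branch_spacing (sigma Xf Xg : R) :
  (sigma = -1 \/ sigma = 1) -> ~ set_closure (set_interior T) sigma ->
  (~ set_closure (branch_interval af bf) sigma ->
     forall x y z, branch_interval af bf x -> branch_interval af bf y ->
       branch_interval af bf z -> Rabs (x - y) <= Xf * Rabs (z - sigma)) ->
  (forall tau, (tau = -1 \/ tau = 1) -> ~ set_closure (branch_interval ag bg) tau ->
     forall x y z, branch_interval ag bg x -> branch_interval ag bg y ->
       branch_interval ag bg z -> Rabs (x - y) <= Xg * Rabs (z - tau)) ->
  forall x y z, set_interior T x -> set_interior T y -> set_interior T z ->
    Rabs (x - y) <= (Rabs Xf + E * Rabs Xg) * Rabs (z - sigma).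
Proof.
  intros Hsigma Hncl HXf HXg x y z Hx Hy Hz.
  pose proof E_nonneg. pose proof (Rabs_pos Xf). pose proof (Rabs_pos Xg).
  pose proof (Rabs_pos (z - sigma)).
  destruct (classic (set_closure (branch_interval af bf) sigma)) as [Hcl | Hcl].
  - apply set_closure_branch_interval in Hcl.
    pose proof (spacing_near_endpoint sigma Xg Hsigma Hcl Hncl HXg x y z Hx Hy Hz). nra.
  - assert (Hbounds : forall w, set_interior T w -> af <= w <= bf).
    { intros w Hw. destruct (interior_image w Hw) as [t [ht ->]]. apply V_into. lra. }
    pose proof (spacing_closed_interval af bf Xf sigma ltac:(lra) (HXf Hcl) x y z
                  (Hbounds x Hx) (Hbounds y Hy) (Hbounds z Hz)).
    assert (0 <= E * Rabs Xg * Rabs (z - sigma)) by (repeat apply Rmult_le_pos; assumption).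
    nra.
Qed.

End CompositeBranch.

Lemma FBM_branch_bounds {I : Type} {a b : I -> R} {f : R -> R} {fhat v : I -> R -> R} :
  FBM I a b f fhat v -> forall i, -1 <= a i /\ a i < b i /\ b i <= 1.
Proof. intros (_ & Hab & _). exact Hab. Qed.

Lemma FBM_inverse_into {I : Type} {a b : I -> R} {f : R -> R} {fhat v : I -> R -> R} :
  FBM I a b f fhat v -> forall i y, -1 <= y <= 1 -> a i <= v i y <= b i.
Proof. intros (_ & _ & _ & _ & _ & _ & _ & _ & Hv) i y hy. apply (Hv i y hy). Qed.

Lemma FBM_inverse_onto {I : Type} {a b : I -> R} {f : R -> R} {fhat v : I -> R -> R} :
  FBM I a b f fhat v -> forall i x, a i <= x <= b i -> exists y, -1 <= y <= 1 /\ v i y = x.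
Proof.
  intros (_ & _ & _ & _ & _ & _ & Hrange & Hinj & Hv) i x hx.
  exists (fhat i x). split; [exact (Hrange i x hx)|].
  destruct (Hv i (fhat i x) (Hrange i x hx)) as [Hvx Hfv].
  exact (Hinj i _ _ Hvx hx Hfv).
Qed.

Lemma FBM_composite_image_iff {I : Type} {a b : I -> R} {g : R -> R} {ghat w : I -> R -> R}
    (V : R -> R) (j : I) (x : R) :
  FBM I a b g ghat w ->
  (exists y, -1 <= y <= 1 /\ x = V (w j y)) <-> (exists t, a j <= t <= b j /\ x = V t).
Proof.
  intros HG. split.
  - intros [y [hy ->]]. exists (w j y). split; [exact (FBM_inverse_into HG j y hy) | reflexivity].
  - intros [t [ht ->]]. destruct (FBM_inverse_onto HG j t ht) as [y [hy <-]].
    exists y. split; [exact hy | reflexivity].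
Qed.

Theorem lemma6
  (If : Type) (af bf : If -> R) (f : R -> R) (fhat vf : If -> R -> R)
  (Ig : Type) (ag bg : Ig -> R) (g : R -> R) (ghat vg : Ig -> R -> R) :
  FBM If af bf f fhat vf ->
  FBM Ig ag bg g ghat vg ->
  spacing_P If (fun i => branch_interval (af i) (bf i)) ->
  spacing_P Ig (fun i => branch_interval (ag i) (bg i)) ->
  bounded_distortion If vf ->
  uniformly_expanding Ig ag bg g ->
  spacing_P (If * Ig) (comp_branches If Ig vf vg).
Proof.
  intros HF HG [Xf HXf] [Xg HXg] [C HC] _.
  exists (Rabs Xf + exp (2 * C) * Rabs Xg).
  intros [i j] sigma Hsigma Hncl.
  destruct (bilipschitz_of_bounded_distortion (vf i) C (HC i)) as (s & m & Hs & Hm & Hbilip).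
  exact (composite_branch_spacing (vf i) (af i) (bf i) (ag j) (bg j) s m (exp (2 * C))
           (fun x => exists y, -1 <= y <= 1 /\ x = vf i (vg j y))
           (FBM_branch_bounds HF i) (FBM_branch_bounds HG j)
           (FBM_inverse_into HF i) (FBM_inverse_onto HF i) Hs Hm Hbilip
           (fun x => FBM_composite_image_iff (vf i) j x HG)
           sigma Xf Xg Hsigma Hncl (HXf i sigma Hsigma) (HXg j)).
Qed.
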